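(* Let $(F,\|\cdot\|)$ be a normed space, $(a_{ij})_{i,j\le n}$ a symmetric matrix with entries in $F$, $g_1,\dots,g_n$ i.i.d. $\mathcal N(0,1)$ random variables, and $p\ge1$. Let $W= \|\sum_{i\neq j}a_{ij}g_ig_j\|_p+\|\sum_{i}a_{ii}(g_i^2-1)\|_p$. Then \[ \frac{1}{3}W \leq \Big\|\sum_{i,j}a_{ij}(g_ig_j-\delta_{ij})\Big\|_p \leq W. \]
   Context: For an $F$-valued random variable $Z$, $\|Z\|_p=(\mathbb{E}\|Z\|^p)^{1/p}$. $\delta_{ij}$ is the Kronecker delta; sums run over $\{1,\dots,n\}$. *)

From HB Require Import structures.
From mathcomp Require Import all_boot all_order all_algebra.
From mathcomp Require Import all_classical all_reals all_analysis.
Set Implicit Arguments. Unset Strict Implicit. Unset Printing Implicit Defensive.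
Import Order.TTheory GRing.Theory Num.Theory.
Import numFieldNormedType.Exports.
Local Open Scope classical_set_scope.
Local Open Scope ring_scope.

(* Mutual independence of a finite family of real random variables:
   product rule for preimages of arbitrary Borel sets (taking B i = setT
   recovers every subfamily). *)
Definition mutually_independent_RVs d (T : measurableType d) (R : realType)
  (P : probability T R) (n : nat) (g : 'I_n -> {RV P >-> R}) : Prop :=
  forall B : 'I_n -> set R, (forall i, measurable (B i)) ->
    P (\bigcap_(i in [set: 'I_n]) (g i @^-1` B i)) =
    (\prod_(i < n) P (g i @^-1` B i))%E.

Definition standard_gaussian d (T : measurableType d) (R : realType)
  (P : probability T R) (X : {RV P >-> R}) : Prop :=
  forall A : set R, measurable A -> distribution P X A = normal_prob 0 1 A.

Definition momentp d (T : measurableType d) (R : realType)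
  (F : normedModType R) (P : probability T R) (p : R) (Z : T -> F) : \bar R :=
  Lnorm P p%:E (fun w => (`|Z w|)%:E).

From HB Require Import structures.
From mathcomp Require Import all_boot all_order all_algebra.
From mathcomp Require Import all_classical all_reals all_analysis.
From mathcomp Require Import ring lra zify measurable_realfun.
Import Order.TTheory GRing.Theory Num.Theory.
Import numFieldNormedType.Exports.
Local Open Scope classical_set_scope.
Local Open Scope ring_scope.

(* Write the chaos Z as X + Y, with X its off-diagonal and Y its diagonal
   part.  The upper bound and ||X||_p <= ||Z||_p + ||Y||_p are the triangle
   inequality in L_p(F); the remaining inequality ||Y||_p <= ||Z||_p is a
   decoupling by sign flips.  Changing the sign of g_k does not change the law
   of (g_1, ..., g_n), and averaging the chaos over this flip removes the
   off-diagonal terms with min(i, j) = k.  By the triangle inequality the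
   average has no larger p-th moment, so removing the off-diagonal terms one
   index at a time takes Z to Y without increasing the moment.  Hence
   W <= ||Z||_p + 2 ||Y||_p <= 3 ||Z||_p. *)
Section measurable_norm_comb.
Context {R : realType} {F : normedModType R} {I : finType} (v : I -> F).

Let N (c : I -> R) := `|\sum_i c i *: v i|.

Let N_lipschitz (c r : I -> R) : N c <= N r + \sum_i `|v i| * `|c i - r i|.
Proof.
rewrite /N -lerBlDl; apply: le_trans (lerB_dist _ _) _.
rewrite -sumrB; under eq_bigr do rewrite -scalerBl.
apply: le_trans (ler_norm_sum _ _ _) _.
by apply: ler_sum => i _; rewrite normrZ mulrC.
Qed.

(* [N] is the supremum of these lower bounds over the countable set of
   rational coefficient vectors [q]. *)
Let N_low (q : {ffun I -> rat}) (c : I -> R) :=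
  N (fun i => ratr (q i)) - \sum_i `|v i| * `|c i - ratr (q i)|.

Let N_low_le q c : N_low q c <= N c.
Proof.
rewrite /N_low lerBlDr; apply: le_trans (N_lipschitz _ c) _.
by rewrite lerD2l; apply: ler_sum => i _; rewrite distrC.
Qed.

Let N_low_approx c e : 0 < e -> exists q, N c - e < N_low q c.
Proof.
move=> e0; pose L := \sum_i `|v i|.
have L0 : 0 <= L by apply: sumr_ge0.
pose de := e / (2 * (L + 1)).
have de0 : 0 < de by rewrite divr_gt0 // mulr_gt0 // ltr_wpDl.
have deL : 2 * (de * L) < e.
  have -> : e = 2 * (de * (L + 1)).
    by rewrite /de; field; rewrite gt_eqF // ltr_wpDl.
  by rewrite ltr_pM2l // ltr_pM2l // ltrDl.
have /choice [q qc] i : exists q : rat, `|c i - ratr q| < de.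
  have /rat_in_itvoo [q] : c i - de < c i + de by rewrite ltrD2l gtrN.
  rewrite in_itv /= => /andP [q1 q2]; exists q.
  by rewrite ltr_norml; apply/andP; split; lra.
exists [ffun i => q i].
have S_small : \sum_i `|v i| * `|c i - ratr ([ffun i => q i] i)| <= de * L.
  rewrite /L mulr_sumr; apply: ler_sum => i _.
  by rewrite mulrC ffunE ler_wpM2r // ltW.
have := N_lipschitz c (fun i => ratr ([ffun i => q i] i)).
rewrite /N_low; lra.
Qed.

Lemma measurable_norm_comb {d} {T : measurableType d} (c : I -> T -> R) :
  (forall i, measurable_fun setT (c i)) ->
  measurable_fun setT (fun w => `|\sum_i c i w *: v i|).
Proof.
move=> mc; pose h k w := N_low (odflt [ffun=> 0] (unpickle k)) (c ^~ w).
have h_le k w : h k w <= N (c ^~ w) by apply: N_low_le.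
have N_sups w : N (c ^~ w) = sups (h ^~ w) 0.
  apply/eqP; rewrite eq_le; apply/andP; split; last first.
    apply: ge_sup; first by exists (h 0%N w), 0%N.
    by move=> _ [k _ <-]; apply: h_le.
  apply/ler_addgt0Pr => e /(N_low_approx (c ^~ w)) [q Nq].
  have hq : h (pickle q) w <= sups (h ^~ w) 0.
    apply: ub_le_sup; last by exists (pickle q).
    by exists (N (c ^~ w)) => _ [k _ <-]; apply: h_le.
  by move: hq; rewrite /h pickleK /=; lra.
rewrite (_ : (fun w => _) = fun w => sups (h ^~ w) 0); last exact/funext.
apply: measurable_fun_sups => [w _|k].
  by exists (N (c ^~ w)) => _ [k _ <-]; apply: h_le.
apply: measurable_funB => //; apply: measurable_sum => i.
apply: measurable_funM => //; apply: measurableT_comp => //.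
exact: measurable_funB.
Qed.

End measurable_norm_comb.

Lemma measurable_norm_mx_comb {R : realType} {F : normedModType R} {m n : nat}
    (a : 'M[F]_(m, n)) {d} {T : measurableType d} (c : 'I_m -> 'I_n -> T -> R) :
  (forall i j, measurable_fun setT (c i j)) ->
  measurable_fun setT (fun w => `|\sum_i \sum_j c i j w *: a i j|).
Proof.
move=> mc; under eq_fun do rewrite pair_bigA /=.
apply: (measurable_norm_comb (fun ij => a ij.1 ij.2) (fun ij => c ij.1 ij.2)).
by move=> [].
Qed.

Section Lnorm_norm.
Context {d} {T : measurableType d} {R : realType} (mu : {measure set T -> \bar R}).
Local Open Scope ereal_scope.

Lemma le_Lnorm_EFin (p : R) (f g : T -> R) : (0 < p)%R ->
  measurable_fun setT f -> measurable_fun setT g ->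
  (forall x, `|f x| <= `|g x|)%R ->
  Lnorm mu p%:E (EFin \o f) <= Lnorm mu p%:E (EFin \o g).
Proof.
move=> p0 mf mg fg; rewrite unlock.
have mp (h : T -> R) : measurable_fun setT h ->
    measurable_fun setT (fun x => `|(h x)%:E| `^ p).
  move=> mh; apply: measurableT_comp (measurable_poweR _) _.
  exact/measurableT_comp/measurableT_comp.
apply: gt0_ler_poweR.
- by rewrite invr_ge0 ltW.
- by rewrite in_itv /= leey andbT integral_ge0 // => x _; apply: poweR_ge0.
- by rewrite in_itv /= leey andbT integral_ge0 // => x _; apply: poweR_ge0.
apply: ge0_le_integral => //; [by move=> x _; apply: poweR_ge0|exact: mp|exact: mp|].
move=> x _; rewrite ?abse_EFin ?poweR_EFin ?lee_fin.
by apply: (ge0_ler_powR (ltW p0)); rewrite ?nnegrE.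
Qed.

Local Close Scope ereal_scope.
Context {F : normedModType R} {p : R}.

Lemma Lnorm_normD (f g : T -> F) : (1 <= p)%R ->
  measurable_fun setT (fun w => `|f w|) -> measurable_fun setT (fun w => `|g w|) ->
  measurable_fun setT (fun w => `|f w + g w|) ->
  (Lnorm mu p%:E (fun w => (`|f w + g w|)%:E) <=
   Lnorm mu p%:E (fun w => (`|f w|)%:E) + Lnorm mu p%:E (fun w => (`|g w|)%:E))%E.
Proof.
move=> p1 mf mg mfg; apply: le_trans _ (minkowski_EFin mu mf mg p1).
apply: le_Lnorm_EFin => //; first exact: lt_le_trans p1.
  exact: measurable_funD.
by move=> w; rewrite normr_id ger0_norm ?addr_ge0 // ler_normD.
Qed.

Lemma Lnorm_normB (f g : T -> F) : (1 <= p)%R ->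
  measurable_fun setT (fun w => `|f w|) -> measurable_fun setT (fun w => `|g w|) ->
  measurable_fun setT (fun w => `|f w - g w|) ->
  (Lnorm mu p%:E (fun w => (`|f w - g w|)%:E) <=
   Lnorm mu p%:E (fun w => (`|f w|)%:E) + Lnorm mu p%:E (fun w => (`|g w|)%:E))%E.
Proof.
move=> p1 mf mg mfg.
have -> : Lnorm mu p%:E (fun w => (`|g w|)%:E) =
          Lnorm mu p%:E (fun w => (`|- g w|)%:E).
  by apply: eq_Lnorm => w; rewrite normrN.
by apply: Lnorm_normD => //; under eq_fun do rewrite normrN.
Qed.

Lemma Lnorm_normZ (c : R) (f : T -> F) : (0 < p)%R ->
  measurable_fun setT (fun w => `|f w|) ->
  Lnorm mu p%:E (fun w => (`|c *: f w|)%:E) =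
  (`|c|%:E * Lnorm mu p%:E (fun w => (`|f w|)%:E))%E.
Proof.
move=> p0 mf; rewrite unlock /=.
under eq_integral do rewrite normr_id normrZ powRM // EFinM.
under [in RHS]eq_integral do rewrite normr_id.
rewrite ge0_integralZl_EFin ?powR_ge0 //; last first.
  exact/measurable_EFinP/(measurableT_comp (measurable_powR p)).
rewrite poweRM ?lee_fin ?powR_ge0 //; last first.
  by apply: integral_ge0 => x _; rewrite lee_fin powR_ge0.
by rewrite poweR_EFin -powRrM mulfV ?gt_eqF // powRr1.
Qed.

End Lnorm_norm.

Section centered_normal.
Context {R : realType} (s : R).
Hypothesis s0 : s != 0.

Let normal_pdf0N x : normal_pdf 0 s (- x) = normal_pdf 0 s x.
Proof. by rewrite normal_pdfE // /normal_fun !subr0 sqrrN. Qed.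

Lemma normal_prob0N (B : set R) : measurable B ->
  normal_prob 0 s (-%R @^-1` B) = normal_prob 0 s B.
Proof.
move=> mB; rewrite /normal_prob.
under eq_integral do rewrite -normal_pdf0N.
rewrite -(ge0_integral_pushforward _ _
  (f := fun x : measurableTypeR R => (normal_pdf 0 s x)%:E)) //=.
- by apply: eq_measure_integral => //= A mA _; apply: lebesgue_measureN.
- by apply/measurable_EFinP; apply: measurable_funTS; apply: measurable_normal_pdf.
- by move=> x _; rewrite lee_fin normal_pdf_ge0.
Qed.

End centered_normal.

Section tuple_box.
Context {d} {T : measurableType d} (n : nat).

Definition tuple_box : set (set (n.-tuple T)) :=
  [set \bigcap_(i in [set: 'I_n]) ((fun x => tnth x i) @^-1` B i)
    | B in [set B : 'I_n -> set T | forall i, measurable (B i)]].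

Lemma tuple_box_measurable : tuple_box `<=` measurable.
Proof.
move=> _ [B mB <-]; apply: fin_bigcap_measurable => // i _.
by rewrite -[X in measurable X]setTI; apply: measurable_tnth.
Qed.

Lemma setI_closed_tuple_box : setI_closed tuple_box.
Proof.
move=> _ _ [B mB <-] [C mC <-]; rewrite -bigcapI.
by exists (fun i => B i `&` C i) => // i; apply: measurableI.
Qed.

Lemma tuple_boxT : tuple_box setT.
Proof. by exists (fun=> setT) => //; apply/seteqP; split. Qed.

Lemma measurable_tuple_boxE : @measurable _ (n.-tuple T) = <<s tuple_box >>.
Proof.
apply/seteqP; split; last first.
  apply: smallest_sub; first exact: sigma_algebra_measurable.
  exact: tuple_box_measurable.
apply: smallest_sub; first exact: smallest_sigma_algebra.
apply: (big_ind (fun Y => Y `<=` <<s tuple_box >>)) => //.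
  by move=> X Y HX HY; rewrite subUset.
move=> i _ _ [A mA <-]; apply: sub_sigma_algebra.
exists (fun j => if j == i then A else setT) => [j|]; first by case: ifP.
apply/seteqP; split => x /=.
  by move=> /(_ i I); rewrite eqxx.
by move=> [_ Ax] j _; case: ifPn => // /eqP ->.
Qed.

End tuple_box.

Section sign_flip.
Context {R : realType} {n : nat} (k : 'I_n).

Definition sign_flip (x : n.-tuple R) : n.-tuple R :=
  [tuple if i == k then - tnth x i else tnth x i | i < n].

Lemma tnth_sign_flip x i :
  tnth (sign_flip x) i = if i == k then - tnth x i else tnth x i.
Proof. exact: tnth_mktuple. Qed.

Lemma measurable_sign_flip : measurable_fun setT sign_flip.
Proof.
apply/measurable_fun_tnthP => i.
rewrite (_ : _ \o _ = fun x => if i == k then - tnth x i else tnth x i).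
  case: (i == k); last exact: measurable_tnth.
  by apply: measurableT_comp; [apply: oppr_measurable|apply: measurable_tnth].
by apply/funext => x /=; rewrite tnth_sign_flip.
Qed.

HB.instance Definition _ :=
  isMeasurableFun.Build _ _ _ _ sign_flip measurable_sign_flip.

Lemma sign_flip_preimage_box (B : 'I_n -> set R) :
  sign_flip @^-1` (\bigcap_(i in [set: 'I_n]) ((fun x => tnth x i) @^-1` B i)) =
  \bigcap_(i in [set: 'I_n])
     ((fun x => tnth x i) @^-1` (if i == k then -%R @^-1` B i else B i)).
Proof.
apply/seteqP; split => x + i _ => /(_ i I); rewrite /preimage /= tnth_sign_flip;
  by case: eqP.
Qed.

End sign_flip.

Section rv_tuple.
Context {d} {T : measurableType d} {R : realType} {n : nat}
  (g : 'I_n -> {mfun T >-> R}).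

Definition rv_tuple (w : T) : n.-tuple R := [tuple g i w | i < n].

Lemma tnth_rv_tuple w i : tnth (rv_tuple w) i = g i w.
Proof. exact: tnth_mktuple. Qed.

Lemma measurable_rv_tuple : measurable_fun setT rv_tuple.
Proof.
apply/measurable_fun_tnthP => i.
by rewrite (_ : _ \o _ = g i) //; apply/funext => w /=; rewrite tnth_rv_tuple.
Qed.

HB.instance Definition _ :=
  isMeasurableFun.Build _ _ _ _ rv_tuple measurable_rv_tuple.

Lemma rv_tuple_preimage_box (B : 'I_n -> set R) :
  rv_tuple @^-1` (\bigcap_(i in [set: 'I_n]) ((fun x => tnth x i) @^-1` B i)) =
  \bigcap_(i in [set: 'I_n]) (g i @^-1` B i).
Proof.
by apply/seteqP; split => w + i _ => /(_ i I); rewrite /preimage /= tnth_rv_tuple.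
Qed.

End rv_tuple.

Definition symmetric_law {d} {T : measurableType d} {R : realType}
  (P : probability T R) (X : T -> R) : Prop :=
  forall B : set R, measurable B -> P (X @^-1` (-%R @^-1` B)) = P (X @^-1` B).

Section sign_flip_invariance.
Context {d} {T : measurableType d} {R : realType} {P : probability T R} {n : nat}
  {g : 'I_n -> {RV P >-> R}} {k : 'I_n}.
Hypothesis indep : mutually_independent_RVs g.
Hypothesis symk : symmetric_law P (g k).

Lemma distribution_sign_flip (A : set (n.-tuple R)) : measurable A ->
  distribution P (sign_flip k \o rv_tuple g) A = distribution P (rv_tuple g) A.
Proof.
move=> mA.
apply: (measure_unique (tuple_box n) (fun=> setT) (measurable_tuple_boxE n)
  (@setI_closed_tuple_box _ _ n) (fun=> tuple_boxT n)) => //.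
- by rewrite bigcup_const.
- move=> _ [B mB <-].
  rewrite -[LHS]/(P (rv_tuple g @^-1` (sign_flip k @^-1` _))).
  rewrite -[RHS]/(P (rv_tuple g @^-1` _)).
  rewrite sign_flip_preimage_box !rv_tuple_preimage_box.
  rewrite !indep // => [|i]; last first.
    by case: eqP => // _; rewrite -[X in measurable X]setTI; apply: oppr_measurable.
  apply: eq_bigr => i _; case: eqP => // ->; exact: symk.
- by move=> _; rewrite -[X in (X < _)%E]/(P setT) probability_setT ltry.
Qed.

Lemma ge0_integral_sign_flip (h : n.-tuple R -> \bar R) :
  measurable_fun setT h -> (forall x, 0 <= h x)%E ->
  (\int[P]_w h (sign_flip k (rv_tuple g w)) = \int[P]_w h (rv_tuple g w))%E.
Proof.
move=> mh h0.
rewrite -[LHS](ge0_integral_distribution (sign_flip k \o rv_tuple g) mh h0).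
rewrite -[RHS](ge0_integral_distribution (rv_tuple g) mh h0).
by apply: eq_measure_integral => A mA _; apply: distribution_sign_flip.
Qed.

Lemma Lnorm_sign_flip (q : R) (f : n.-tuple R -> \bar R) : measurable_fun setT f ->
  Lnorm P q%:E (fun w => f (sign_flip k (rv_tuple g w))) =
  Lnorm P q%:E (fun w => f (rv_tuple g w)).
Proof.
move=> mf; rewrite unlock; congr (poweR _ _).
apply: (ge0_integral_sign_flip (fun x => `|f x| `^ q)%E) => [|x]; last first.
  exact: poweR_ge0.
exact: measurableT_comp (measurable_poweR _) (measurableT_comp _ mf).
Qed.

End sign_flip_invariance.

Lemma half_adde_self (R : realFieldType) (x : \bar R) : (2^-1%:E * (x + x))%E = x.
Proof.
case: x => [r| |] /=.
- by rewrite -EFinD -EFinM; congr EFin; field.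
- by rewrite gt0_muley // lte_fin invr_gt0.
- by rewrite gt0_muleNy // lte_fin invr_gt0.
Qed.

Section partial_chaos.
Context {R : realType} {F : normedModType R} {n : nat} (a : 'M[F]_n).

(* The off-diagonal terms a_ij with min(i, j) < k have been averaged out. *)
Definition partial_chaos_coef (k : nat) (i j : 'I_n) (x : n.-tuple R) : R :=
  if (i == j) || ((k <= i) && (k <= j))%N then tnth x i * tnth x j - (i == j)%:R
  else 0.

Definition partial_chaos (k : nat) (x : n.-tuple R) : F :=
  \sum_i \sum_j partial_chaos_coef k i j x *: a i j.

Lemma partial_chaos_coefS (k i j : 'I_n) x :
  partial_chaos_coef k.+1 i j x =
  2^-1 * (partial_chaos_coef k i j x + partial_chaos_coef k i j (sign_flip k x)).
Proof.
rewrite /partial_chaos_coef !tnth_sign_flip.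
have [<-|ij] := eqVneq i j.
  by case: eqP => _ /=; rewrite ?mulrNN; field.
have valE (l : 'I_n) : (l == k) = (nat_of_ord l == k) by [].
rewrite /= !valE; case: ifP => [kij|nkij].
  have -> : ((k <= i) && (k <= j))%N by lia.
  have -> : (nat_of_ord i == k) = false by lia.
  have -> : (nat_of_ord j == k) = false by lia.
  by field.
case: ifP => [kij|_]; last by rewrite addr0 mulr0.
have [[-> ->]|[-> ->]] : ((nat_of_ord i == k) /\ (nat_of_ord j == k) = false) \/
                         ((nat_of_ord i == k) = false /\ (nat_of_ord j == k)).
  by have : nat_of_ord i != j := ij; lia.
all: by field.
Qed.

Lemma partial_chaosS (k : 'I_n) x :
  partial_chaos k.+1 x =
  2^-1 *: (partial_chaos k x + partial_chaos k (sign_flip k x)).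
Proof.
rewrite /partial_chaos -big_split scaler_sumr; apply: eq_bigr => i _.
rewrite -big_split scaler_sumr; apply: eq_bigr => j _.
by rewrite /= -scalerDl scalerA partial_chaos_coefS.
Qed.

Lemma partial_chaos0 x :
  partial_chaos 0 x = \sum_i \sum_j (tnth x i * tnth x j - (i == j)%:R) *: a i j.
Proof.
by apply: eq_bigr => i _; apply: eq_bigr => j _; rewrite /partial_chaos_coef orbT.
Qed.

Lemma partial_chaos_diag x :
  partial_chaos n x = \sum_i (tnth x i ^+ 2 - 1) *: a i i.
Proof.
apply: eq_bigr => i _; rewrite (bigD1 i) //= big1 ?addr0.
  by rewrite /partial_chaos_coef eqxx expr2.
move=> j ji; rewrite /partial_chaos_coef eq_sym (negbTE ji) /=.
by rewrite leqNgt ltn_ord scale0r.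
Qed.

Lemma measurable_partial_chaos k :
  measurable_fun setT (fun x : n.-tuple R => `|partial_chaos k x|).
Proof.
apply: measurable_norm_mx_comb => i j; rewrite /partial_chaos_coef.
case: (_ || _) => //; apply: measurable_funB => //.
by apply: measurable_funM; apply: measurable_tnth.
Qed.

End partial_chaos.

Section chaos.
Context {d} {T : measurableType d} {R : realType} {F : normedModType R} {n : nat}
  (a : 'M[F]_n) (g : 'I_n -> {mfun T >-> R}).

Definition chaos w := \sum_i \sum_j (g i w * g j w - (i == j)%:R) *: a i j.
Definition offdiag_chaos w := \sum_i \sum_(j | i != j) (g i w * g j w) *: a i j.
Definition diag_chaos w := \sum_i (g i w ^+ 2 - 1) *: a i i.

Lemma chaosE w : chaos w = offdiag_chaos w + diag_chaos w.
Proof.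
rewrite /chaos -big_split; apply: eq_bigr => i _ /=.
rewrite (bigD1 i) //= eqxx addrC; congr (_ + _).
apply: eq_big => j; first by rewrite eq_sym.
by move=> ji; rewrite eq_sym (negbTE ji) subr0.
Qed.

Lemma measurable_norm_chaos : measurable_fun setT (fun w => `|chaos w|).
Proof.
apply: measurable_norm_mx_comb => i j.
by apply: measurable_funB => //; apply: measurable_funM.
Qed.

Lemma measurable_norm_offdiag_chaos :
  measurable_fun setT (fun w => `|offdiag_chaos w|).
Proof.
rewrite (_ : (fun w => _) = fun w =>
    `|\sum_i \sum_j (if i != j then g i w * g j w else 0) *: a i j|).
  apply: measurable_norm_mx_comb => i j.
  by case: (i != j) => //; apply: measurable_funM.
apply/funext => w; congr `|_|; apply: eq_bigr => i _.
by rewrite big_mkcond; apply: eq_bigr => j _; case: ifP; rewrite ?scale0r.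
Qed.

Lemma measurable_norm_diag_chaos : measurable_fun setT (fun w => `|diag_chaos w|).
Proof.
apply: (measurable_norm_comb (fun i => a i i) (fun i w => g i w ^+ 2 - 1)) => i.
by apply: measurable_funB => //; apply: measurable_funX.
Qed.

End chaos.

Section decoupling.
Context {d} {T : measurableType d} {R : realType} {P : probability T R}
  {F : normedModType R} {n : nat} (a : 'M[F]_n) {g : 'I_n -> {RV P >-> R}} {p : R}.
Hypothesis indep : mutually_independent_RVs g.
Hypothesis gsym : forall i, symmetric_law P (g i).
Hypothesis p1 : 1 <= p.

Let mchaos k : measurable_fun setT (fun w => `|partial_chaos a k (rv_tuple g w)|).
Proof.
exact: measurableT_comp (measurable_partial_chaos a k) (measurable_rv_tuple g).
Qed.

Lemma momentp_partial_chaosS (k : 'I_n) :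
  (momentp P p (partial_chaos a k.+1 \o rv_tuple g) <=
   momentp P p (partial_chaos a k \o rv_tuple g))%E.
Proof.
have p0 : 0 < p by apply: lt_le_trans p1.
have mflip : measurable_fun setT
    (fun w => `|partial_chaos a k (sign_flip k (rv_tuple g w))|).
  apply: measurableT_comp (measurable_partial_chaos a k) _.
  exact: measurableT_comp (measurable_sign_flip k) (measurable_rv_tuple g).
rewrite /momentp (eq_Lnorm _ _ (fun w => congr1 (fun v => (`|v|)%:E)
  (partial_chaosS a k (rv_tuple g w)))).
have msum : measurable_fun setT (fun w => `|partial_chaos a k (rv_tuple g w) +
                                  partial_chaos a k (sign_flip k (rv_tuple g w))|).
  rewrite (_ : (fun w => _) = fun w => 2 * `|partial_chaos a k.+1 (rv_tuple g w)|).
    exact: measurable_funM.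
  apply/funext => w; rewrite partial_chaosS normrZ ger0_norm ?invr_ge0 //.
  by rewrite mulrA mulfV ?mul1r.
rewrite Lnorm_normZ // [`|2^-1|]ger0_norm ?invr_ge0 //.
apply: le_trans (lee_wpmul2l _ (Lnorm_normD P _ _ p1 (mchaos k) mflip msum)) _.
  by rewrite lee_fin invr_ge0.
rewrite (Lnorm_sign_flip indep (gsym k) p (fun x => (`|partial_chaos a k x|)%:E));
  last by apply: measurableT_comp => //; apply: measurable_partial_chaos.
by rewrite half_adde_self.
Qed.

Lemma momentp_diag_le_chaos :
  (momentp P p (diag_chaos a g) <= momentp P p (chaos a g))%E.
Proof.
have -> : momentp P p (diag_chaos a g) =
          momentp P p (partial_chaos a n \o rv_tuple g).
  apply: eq_Lnorm => w; rewrite /= partial_chaos_diag.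
  by congr (`|_|%:E); apply: eq_bigr => i _; rewrite tnth_rv_tuple.
have -> : momentp P p (chaos a g) = momentp P p (partial_chaos a 0 \o rv_tuple g).
  apply: eq_Lnorm => w; rewrite /= partial_chaos0.
  congr (`|_|%:E); apply: eq_bigr => i _; apply: eq_bigr => j _.
  by rewrite !tnth_rv_tuple.
suff le_k k : (k <= n)%N -> (momentp P p (partial_chaos a k \o rv_tuple g) <=
                            momentp P p (partial_chaos a 0 \o rv_tuple g))%E.
  exact: le_k.
elim: k => [|k IH] kn //; apply: le_trans (IH (ltnW kn)).
exact: (momentp_partial_chaosS (Ordinal kn)).
Qed.

End decoupling.

Lemma standard_gaussian_symmetric {d} {T : measurableType d} {R : realType}
  {P : probability T R} (X : {RV P >-> R}) :
  standard_gaussian X -> symmetric_law P X.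
Proof.
move=> gX B mB.
have mNB : measurable (-%R @^-1` B).
  by rewrite -[X in measurable X]setTI; apply: oppr_measurable.
have := gX _ mNB; have := gX _ mB; rewrite /distribution /pushforward => -> ->.
exact: normal_prob0N.
Qed.

Lemma lee_third_sum (R : realFieldType) (x y m : \bar R) : (0 <= m)%E ->
  (x <= m + y)%E -> (y <= m)%E -> ((3%:R)^-1%:E * (x + y) <= m)%E.
Proof.
move=> m0 xmy ym.
have xy3m : (x + y <= m + m + m)%E.
  exact: le_trans (leeD xmy ym) (leeD (leeD (lexx m) ym) (lexx m)).
apply: le_trans (lee_wpmul2l _ xy3m) _; first by rewrite lee_fin invr_ge0.
case: m m0 {xmy ym xy3m} => [r| |] //.
  by rewrite lee_fin => r0; rewrite -!EFinD -EFinM lee_fin (_ : _ * _ = r) //; field.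
by move=> _; rewrite /= gt0_muley // lte_fin invr_gt0.
Qed.

Theorem lemma3p1 (d : measure_display) (T : measurableType d) (R : realType)
  (P : probability T R) (F : normedModType R) (n : nat)
  (a : 'M[F]_n) (g : 'I_n -> {RV P >-> R}) (p : R) :
  a^T = a ->
  mutually_independent_RVs g ->
  (forall i, standard_gaussian (g i)) ->
  1 <= p ->
  let W := (momentp P p (fun w => (\sum_(i < n) \sum_(j < n | i != j)
                                     (g i w * g j w) *: a i j)%R)
          + momentp P p (fun w => (\sum_(i < n) (g i w ^+ 2 - 1) *: a i i)%R))%E in
  let M := momentp P p (fun w => \sum_(i < n) \sum_(j < n)
                     (g i w * g j w - (i == j)%:R) *: a i j) in
  ((3%:R)^-1%:E * W <= M)%E /\ (M <= W)%E.
Proof.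
move=> _ indep gauss p1 W M.
rewrite {}/W {}/M -/(chaos a g) -/(offdiag_chaos a g) -/(diag_chaos a g).
have gsym i := standard_gaussian_symmetric _ (gauss i).
have diag_le := momentp_diag_le_chaos a indep gsym p1.
have mX := measurable_norm_offdiag_chaos a g.
have mY := measurable_norm_diag_chaos a g.
split.
- apply: lee_third_sum diag_le; first exact: Lnorm_ge0.
  have -> : momentp P p (offdiag_chaos a g) =
            momentp P p (fun w => chaos a g w - diag_chaos a g w).
    by apply: eq_Lnorm => w; rewrite /= chaosE addrK.
  apply: Lnorm_normB => //; first exact: measurable_norm_chaos.
  by under eq_fun do rewrite chaosE addrK.
- rewrite /momentp (eq_Lnorm _ _ (fun w => congr1 (fun v => (`|v|)%:E)
                                                  (chaosE a g w))).
  apply: Lnorm_normD => //.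
  by under eq_fun do rewrite -chaosE; apply: measurable_norm_chaos.
Qed.
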